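(* Let $G'$ be an $\mathcal{R}_3$-independent graph and let $G$ be obtained from $G'$ by a double-1-extension. Then $G$ is $\mathcal{R}_3$-independent.
   Context: All graphs are finite and simple. $G$ is obtained from $G'$ by a double-1-extension if $G$ is obtained by deleting an edge $uv$ of $G'$, adding two new vertices $a,b$, and adding 7 new edges: $ab$, three edges joining $a$ to vertices of $G'$ and three edges joining $b$ to vertices of $G'$, such that $u,v\in N(a)\cup N(b)$. For $p:V\to\mathbb{R}^3$, the rigidity matrix $R(G,p)$ is the $|E|\times 3|V|$ matrix whose row for edge $xy$ has $p(x)-p(y)$ in the columns of $x$, $p(y)-p(x)$ in the columns of $y$, zeros elsewhere; a graph is $\mathcal{R}_3$-independent if these rows are linearly independent for generic $p$ (coordinates algebraically independent over $\mathbb{Q}$). *)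

From HB Require Import structures.
From mathcomp Require Import all_boot all_order all_algebra.
From mathcomp Require Import reals.
From mathcomp Require Import mpoly.
Set Implicit Arguments. Unset Strict Implicit. Unset Printing Implicit Defensive.
Import Order.TTheory GRing.Theory Num.Theory.
Local Open Scope ring_scope.

Record graph (T : finType) := Graph { gV : {set T}; gE : {set {set T}} }.

Definition simple_graph (T : finType) (G : graph T) : Prop :=
  forall e, e \in gE G -> #|e| = 2%N /\ e \subset gV G.

Definition double_1_extension (T : finType) (G' G : graph T) : Prop :=
  exists (u v a b : T) (Na Nb : {set T}),
    [/\ [set u; v] \in gE G',
        [/\ a \notin gV G', b \notin gV G' & a != b],
        [/\ Na \subset gV G', Nb \subset gV G', #|Na| = 3%N & #|Nb| = 3%N],
        (u \in Na :|: Nb) /\ (v \in Na :|: Nb) &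
        gV G = gV G' :|: [set a; b] /\
        gE G = ((gE G' :\ [set u; v]) :|: [set [set a; b]])
               :|: ([set [set a; x] | x in Na] :|: [set [set b; x] | x in Nb])].

(* Entry of the rigidity matrix R(G,p) in row e = {x,y} and column (z,k):
   p(x)-p(y) (k-th coordinate) if z = x, p(y)-p(x) if z = y, 0 otherwise.
   For a 2-set e containing z, the sum below has exactly one nonzero term,
   namely p(z)-p(w) for the other endpoint w. *)
Definition rig_entry (R : realType) (T : finType) (p : T -> 'rV[R]_3)
    (e : {set T}) (z : T) (k : 'I_3) : R :=
  if z \in e then \sum_(w in e) (p z 0 k - p w 0 k) else 0.

Definition rows_independent (R : realType) (T : finType) (G : graph T)
    (p : T -> 'rV[R]_3) : Prop :=
  forall w : {set T} -> R,
    (forall z, z \in gV G -> forall k : 'I_3,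
        \sum_(e in gE G) w e * rig_entry p e z k = 0) ->
    forall e, e \in gE G -> w e = 0.

Definition generic (R : realType) (T : finType) (p : T -> 'rV[R]_3) : Prop :=
  forall P : {mpoly rat[#|{: T * 'I_3}|]}, P != 0 ->
    (map_mpoly (GRing.RMorphism.clone _ _ (@ratr R) _) P).@[
       fun i : 'I_#|{: T * 'I_3}| =>
         let xk := enum_val i in p xk.1 0 xk.2] != 0.

Definition R3_independent (R : realType) (T : finType) (G : graph T) : Prop :=
  forall p : T -> 'rV[R]_3, generic p -> rows_independent G p.

(* It suffices to find ONE realization of G whose rigidity matrix has
   independent rows: the Gram determinant of the (padded) rigidity matrix is a
   polynomial with rational coefficients in the coordinates, so if it does not
   vanish somewhere it does not vanish at a generic point.  We keep the points
   of G' generic and put a, and b too when u and v are not joined to the same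
   new vertex, on the line through u and v.  Genericity of the other points
   then forces the equilibrium conditions at a and b to kill the stresses on
   all new edges except those at u and v, which act along uv exactly like a
   stress on the deleted edge uv; independence of G' kills that one. *)

From mathcomp Require Import all_boot all_order all_algebra reals mpoly.
From mathcomp Require Import ring lra.
Set Implicit Arguments. Unset Strict Implicit. Unset Printing Implicit Defensive.
Import Order.TTheory GRing.Theory Num.Theory.
Local Open Scope ring_scope.

Section FiniteSets.
Variable T : finType.
Implicit Types (A : {set T}) (u v x : T).

Lemma disjoint_sep (A B : {set T}) (P : pred T) :
  {in A, forall x, P x} -> {in B, forall x, ~~ P x} -> [disjoint A & B].
Proof.
move=> PA PB; rewrite -setI_eq0; apply/eqP/setP => x; rewrite !inE.
by apply/andP => -[/PA Px /PB]; rewrite Px.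
Qed.

Lemma big_setU_disjoint (K : nmodType) (A B : {set T}) (F : T -> K) :
  [disjoint A & B] ->
  \sum_(x in A :|: B) F x = \sum_(x in A) F x + \sum_(x in B) F x.
Proof. by move=> AB; rewrite -bigU //; apply: eq_bigl => x; rewrite !inE. Qed.

Lemma sum_if_eq (K : nmodType) (A : {set T}) z (F : T -> K) :
  \sum_(y in A) (if y == z then F y else 0) = if z \in A then F z else 0.
Proof.
rewrite -big_mkcondr; case: ifP => zA.
  by rewrite (big_pred1 z) // => y /=; rewrite andbC; case: eqP => [-> | _].
by rewrite big_pred0 // => y; case: eqP => [-> | _]; rewrite ?zA ?andbF.
Qed.

Lemma set2_inj a x y : x != a -> [set a; x] = [set a; y] -> x = y.
Proof.
move=> xa axy; have : x \in [set a; y] by rewrite -axy !inE eqxx orbT.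
by rewrite !inE (negbTE xa) => /eqP.
Qed.

Lemma big_set3 (K : nmodType) u v x (F : T -> K) : uniq [:: u; v; x] ->
  \sum_(y in [set u; v; x]) F y = F u + F v + F x.
Proof.
rewrite /= !inE negb_or andbT -andbA => /and3P [uv ux vx].
rewrite -setUA big_setU1 /=; last by rewrite !inE negb_or uv.
by rewrite big_setU1 ?big_set1 ?addrA ?inE.
Qed.

Lemma card3_set1U A u : #|A| = 3%N -> u \in A ->
  exists x1 x2, uniq [:: u; x1; x2] /\ A = [set u; x1; x2].
Proof.
move=> A3 uA; have /cards2P [x1 [x2 [x12 Au]]] : #|A :\ u| == 2%N.
  by move: (cardsD1 u A); rewrite uA A3 add1n => -[<-].
have : (x1 \in A :\ u) && (x2 \in A :\ u) by rewrite Au !inE !eqxx orbT.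
rewrite !inE => /andP [/andP [x1u _] /andP [x2u _]].
exists x1, x2; split; first by rewrite /= !inE negb_or !(eq_sym u) x1u x2u x12.
apply/setP => y; rewrite -setUA [RHS]in_setU1 -Au in_setD1.
by case: eqVneq => [->|].
Qed.

Lemma card3_set2U A u v : #|A| = 3%N -> u \in A -> v \in A -> u != v ->
  exists x, uniq [:: u; v; x] /\ A = [set u; v; x].
Proof.
move=> A3 uA vA uv; have [x1 [x2 [uniq_ux Au]]] := card3_set1U A3 uA.
move: vA uniq_ux; rewrite Au !inE eq_sym (negbTE uv) /= => /orP [] /eqP <- uniq_ux.
  by exists x2.
exists x1; split; last by rewrite -!setUA [[set v; x1]]setUC.
move: uniq_ux; rewrite /= !inE !negb_or !andbT => /andP [/andP [ux1 uv'] x1v].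
by rewrite ux1 uv' eq_sym x1v.
Qed.

Lemma uniq_cons_set3 y x1 x2 x3 :
  uniq [:: x1; x2; x3] -> y \notin [set x1; x2; x3] -> uniq [:: y; x1; x2; x3].
Proof. by move=> uniq_x; rewrite cons_uniq uniq_x andbT !inE orbA. Qed.

End FiniteSets.

Section RigidityMatrix.
Variable T : finType.

(* [rig_entry] with coordinates in an arbitrary ring (such as polynomials);
   [rows_independent G p] is [stress_free G (coords p)] by conversion. *)
Definition rig_coef (K : pzRingType) (f : T -> 'I_3 -> K) (e : {set T}) z k : K :=
  if z \in e then \sum_(w in e) (f z k - f w k) else 0.

Definition is_stress (K : pzRingType) (G : graph T) (f : T -> 'I_3 -> K)
    (w : {set T} -> K) : Prop :=
  forall z, z \in gV G -> forall k, \sum_(e in gE G) w e * rig_coef f e z k = 0.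

Definition stress_free (K : pzRingType) (G : graph T) (f : T -> 'I_3 -> K) : Prop :=
  forall w, is_stress G f w -> forall e, e \in gE G -> w e = 0.

Lemma rig_coef_map (K K' : pzRingType) (h : {rmorphism K -> K'}) f e z k :
  h (rig_coef f e z k) = rig_coef (fun z k => h (f z k)) e z k.
Proof.
rewrite /rig_coef; case: ifP => _; last exact: rmorph0.
by rewrite rmorph_sum; apply: eq_bigr => w _; rewrite rmorphB.
Qed.

Lemma rig_coef_notin (K : pzRingType) (f : T -> 'I_3 -> K) (e : {set T}) z k :
  z \notin e -> rig_coef f e z k = 0.
Proof. by rewrite /rig_coef => /negbTE ->. Qed.

Lemma rig_coef2 (K : pzRingType) (f : T -> 'I_3 -> K) (a y z : T) k : a != y ->
  rig_coef f [set a; y] z k =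
  if z == a then f a k - f y k else if z == y then f y k - f a k else 0.
Proof.
move=> ay; rewrite /rig_coef !inE big_setU1 ?inE // big_set1.
case: (eqVneq z a) => [->|za] /=; first by rewrite subrr add0r.
by case: (eqVneq z y) => [->|zy] //=; rewrite subrr addr0.
Qed.

Lemma eq_rig_coef (K : pzRingType) (f g : T -> 'I_3 -> K) (e : {set T}) z k :
  {in z |: e, forall x, f x k = g x k} -> rig_coef f e z k = rig_coef g e z k.
Proof.
move=> fg; rewrite /rig_coef; case: ifP => // _.
by apply: eq_bigr => w we; rewrite !fg // !inE ?we ?orbT ?eqxx.
Qed.

Lemma is_stress_eq (K : pzRingType) (G : graph T) f (w w' : {set T} -> K) :
  {in gE G, w =1 w'} -> is_stress G f w -> is_stress G f w'.
Proof.
move=> ww' hw z zV k; rewrite -[RHS](hw z zV k).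
by apply: eq_bigr => e eE; rewrite ww'.
Qed.

(* The rows are indexed by all subsets of T; rows of non-edges are zero in
   [rigmx] and get a unit vector in [nonedge_mx], so that the Gram matrix of
   [padded_rigmx] is invertible exactly when the edge rows are independent. *)
Definition rigmx (K : pzRingType) (G : graph T) (f : T -> 'I_3 -> K) :
    'M[K]_(#|{: {set T}}|, #|{: T * 'I_3}|) :=
  \matrix_(i, j) if (enum_val i \in gE G) && ((enum_val j).1 \in gV G)
                 then rig_coef f (enum_val i) (enum_val j).1 (enum_val j).2 else 0.

Definition nonedge_mx (K : pzRingType) (G : graph T) : 'M[K]_#|{: {set T}}| :=
  diag_mx (\row_i (enum_val i \notin gE G)%:R).

Definition padded_rigmx (K : pzRingType) (G : graph T) (f : T -> 'I_3 -> K) :=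
  row_mx (rigmx G f) (nonedge_mx K G).

Definition gram_mx (K : pzRingType) (G : graph T) (f : T -> 'I_3 -> K) :=
  padded_rigmx G f *m (padded_rigmx G f)^T.

Lemma map_gram_mx (K K' : pzRingType) (h : {rmorphism K -> K'}) G f :
  map_mx h (gram_mx G f) = gram_mx G (fun z k => h (f z k)).
Proof.
have hE : map_mx h (padded_rigmx G f) = padded_rigmx G (fun z k => h (f z k)).
  rewrite /padded_rigmx map_row_mx; congr row_mx; apply/matrixP => i j; rewrite !mxE.
    by case: ifP => _; rewrite ?rmorph0 ?rig_coef_map.
  by case: eqP => _; rewrite ?rmorph0 ?rmorph_nat.
by rewrite /gram_mx map_mxM -map_trmx hE.
Qed.

Lemma mul_rigmx_eq0 (K : pzRingType) G f (c : 'rV[K]_#|{: {set T}}|) :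
  c *m rigmx G f = 0 <-> is_stress G f (fun e => c 0 (enum_rank e)).
Proof.
have cR j : (c *m rigmx G f) 0 j = if (enum_val j).1 \in gV G then
    \sum_(e in gE G) c 0 (enum_rank e) * rig_coef f e (enum_val j).1 (enum_val j).2
  else 0.
  rewrite mxE; case: ifP => zV; last by apply: big1 => i _; rewrite mxE zV andbF mulr0.
  rewrite (reindex _ (onW_bij _ (enum_rank_bij _))) [RHS]big_mkcond.
  by apply: eq_bigr => e _; rewrite mxE enum_rankK zV andbT; case: ifP; rewrite ?mulr0.
split=> [cR0 z zV k | hc].
  by have := cR (enum_rank (z, k)); rewrite cR0 enum_rankK /= zV mxE.
apply/matrixP => i j; rewrite ord1 cR mxE.
by case: ifP => // zV; apply: hc.
Qed.

Lemma mul_nonedge_mx_eq0 (K : pzRingType) G (c : 'rV[K]_#|{: {set T}}|) :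
  c *m nonedge_mx K G = 0 <-> forall e, e \notin gE G -> c 0 (enum_rank e) = 0.
Proof.
rewrite /nonedge_mx mul_mx_diag; split=> [/matrixP c0 e eE | c0].
  by have := c0 0 (enum_rank e); rewrite !mxE enum_rankK eE mulr1.
apply/matrixP => i j; rewrite !mxE ord1.
case: (boolP (enum_val j \in gE G)) => eE; first by rewrite mulr0.
by rewrite -(enum_valK j) c0 ?enum_valK ?mul0r.
Qed.

Lemma mul_padded_rigmx_eq0 (K : pzRingType) G f (c : 'rV[K]_#|{: {set T}}|) :
  c *m padded_rigmx G f = 0 <->
  is_stress G f (fun e => c 0 (enum_rank e)) /\
  forall e, e \notin gE G -> c 0 (enum_rank e) = 0.
Proof.
rewrite /padded_rigmx mul_mx_row -mul_rigmx_eq0 -mul_nonedge_mx_eq0.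
split=> [/eqP | [-> ->]]; last by rewrite row_mx0.
by rewrite row_mx_eq0 => /andP [/eqP -> /eqP ->].
Qed.

Lemma mulmx_tr_eq0 (R : realDomainType) n (y : 'rV[R]_n) : y *m y^T = 0 -> y = 0.
Proof.
move/matrixP/(_ 0 0); rewrite !mxE => y0.
have sq_ge0 j : true -> 0 <= y 0 j * y^T j 0 by rewrite mxE -expr2 sqr_ge0.
apply/matrixP => i j; rewrite ord1 mxE; apply/eqP.
by have /eqP := psumr_eq0P sq_ge0 y0 (i := j) isT; rewrite mxE -expr2 sqrf_eq0.
Qed.

Lemma stress_free_gram (K : fieldType) G (f : T -> 'I_3 -> K) :
  \det (gram_mx G f) != 0 -> stress_free G f.
Proof.
move=> det0 w hw e eE.
pose c : 'rV[K]_#|{: {set T}}| :=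
  \row_i if enum_val i \in gE G then w (enum_val i) else 0.
have cM0 : c *m padded_rigmx G f = 0.
  apply/mul_padded_rigmx_eq0; split=> [|e' e'E].
    by apply: is_stress_eq hw => e' e'E; rewrite mxE enum_rankK e'E.
  by rewrite mxE enum_rankK (negbTE e'E).
have gram_unit : gram_mx G f \in unitmx by rewrite unitmxE unitfE.
have /matrixP/(_ 0 (enum_rank e)) : c = 0.
  by rewrite -(mulmxK gram_unit c) /gram_mx mulmxA cM0 !mul0mx.
by rewrite !mxE enum_rankK eE.
Qed.

Lemma gram_det_neq0 (K : realFieldType) G (f : T -> 'I_3 -> K) :
  stress_free G f -> \det (gram_mx G f) != 0.
Proof.
move=> hG; apply/negP => /det0P [c /negP c0 cK]; apply: c0.
have /mul_padded_rigmx_eq0 [hc nE] : c *m padded_rigmx G f = 0.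
  by apply: mulmx_tr_eq0; rewrite trmx_mul mulmxA -(mulmxA c) cK mul0mx.
apply/eqP/matrixP => i j; rewrite ord1 mxE -(enum_valK j).
by case: (boolP (enum_val j \in gE G)) => eE; [apply: hG hc _ eE | apply: nE].
Qed.

End RigidityMatrix.

Section GenericPoints.
Variables (R : realType) (T : finType).
Local Notation N := #|{: T * 'I_3}|.

Definition coords (p : T -> 'rV[R]_3) : T -> 'I_3 -> R :=
  fun z k => p z 0 k.

Definition coord_pt (f : T -> 'I_3 -> R) : 'I_N -> R :=
  fun i => f (enum_val i).1 (enum_val i).2.

Definition coord_var (z : T) (k : 'I_3) : {mpoly rat[N]} := 'X_(enum_rank (z, k)).

Definition evalq (x : 'I_N -> R) :=
  meval x \o map_mpoly (GRing.RMorphism.clone _ _ (@ratr R) _).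

Lemma evalq_coord_var f : (fun z k => evalq (coord_pt f) (coord_var z k)) = f.
Proof.
apply: boolp.funext => z; apply: boolp.funext => k.
by rewrite /evalq /= /map_mpoly mmapX mmap1U mevalXU /coord_pt enum_rankK.
Qed.

Lemma generic_det_neq0 n (M : 'M[{mpoly rat[N]}]_n) (p : T -> 'rV[R]_3) x :
  generic p -> \det (map_mx (evalq x) M) != 0 ->
  \det (map_mx (evalq (coord_pt (coords p))) M) != 0.
Proof.
rewrite !det_map_mx => gp; apply: contraNneq => M0.
have [-> | /gp /eqP[]] := eqVneq (\det M) 0; first by rewrite rmorph0.
exact: M0.
Qed.

Lemma generic_stress_free (p : T -> 'rV[R]_3) G (f : T -> 'I_3 -> R) :
  generic p -> stress_free G f -> stress_free G (coords p).
Proof.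
move=> gp /gram_det_neq0 hf; apply: stress_free_gram.
have := generic_det_neq0 (M := gram_mx G coord_var) (x := coord_pt f) gp.
by rewrite !map_gram_mx !evalq_coord_var; apply.
Qed.

Definition edge_vectors_mx (K : pzRingType) (f : T -> 'I_3 -> K) u (s : seq T) :
    'M[K]_3 :=
  \matrix_(i, k) (f (nth u s i) k - f u k).

Lemma map_edge_vectors_mx (K K' : pzRingType) (h : {rmorphism K -> K'}) f u s :
  map_mx h (edge_vectors_mx f u s) = edge_vectors_mx (fun z k => h (f z k)) u s.
Proof. by apply/matrixP => i k; rewrite !mxE rmorphB. Qed.

Lemma generic_affine_indep (p : T -> 'rV[R]_3) u v x y (c1 c2 c3 : R) :
  generic p -> uniq [:: u; v; x; y] ->
  (forall k, c1 * (p v 0 k - p u 0 k) + c2 * (p x 0 k - p u 0 k)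
             + c3 * (p y 0 k - p u 0 k) = 0) ->
  [/\ c1 = 0, c2 = 0 & c3 = 0].
Proof.
move=> gp uniq_uvxy hc; set s := [:: v; x; y].
set M := edge_vectors_mx (coords p) u s.
(* u at the origin, v, x and y at the standard basis vectors *)
pose simplex z (k : 'I_3) : R := (nth u s k == z)%:R.
have simplex_mx : edge_vectors_mx simplex u s = 1%:M.
  have [us uniq_s] : u \notin s /\ uniq s by move: uniq_uvxy => /andP.
  apply/matrixP => i k; rewrite !mxE /simplex eq_sym (nth_uniq u _ _ uniq_s) //.
  by rewrite [nth u s k == u](negbTE (memPn us _ (mem_nth u _))) ?subr0.
have detM : \det M != 0.
  have := generic_det_neq0 (M := edge_vectors_mx coord_var u s)
                           (x := coord_pt simplex) gp.
  by rewrite !map_edge_vectors_mx !evalq_coord_var simplex_mx det1 oner_neq0; apply.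
pose c : 'rV[R]_3 := \row_i nth 0 [:: c1; c2; c3] i.
have /(congr1 (mulmx^~ (invmx M))) : c *m M = 0.
  apply/matrixP => i k; rewrite ord1 !mxE !big_ord_recr big_ord0 /= !mxE /=.
  by rewrite add0r -(hc k).
rewrite mulmxK ?unitmxE ?unitfE // mul0mx => /matrixP c0.
by split; [move: (c0 0 0) | move: (c0 0 1) | move: (c0 0 2%:R)]; rewrite !mxE.
Qed.

End GenericPoints.

Section DoubleExtension.
Variable T : finType.

Definition d1ext (G' G : graph T) (u v a b : T) (Na Nb : {set T}) : Prop :=
  [/\ [set u; v] \in gE G',
      [/\ a \notin gV G', b \notin gV G' & a != b],
      [/\ Na \subset gV G', Nb \subset gV G', #|Na| = 3%N & #|Nb| = 3%N],
      (u \in Na :|: Nb) /\ (v \in Na :|: Nb) &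
      gV G = gV G' :|: [set a; b] /\
      gE G = ((gE G' :\ [set u; v]) :|: [set [set a; b]])
             :|: ([set [set a; x] | x in Na] :|: [set [set b; x] | x in Nb])].


Lemma d1ext_sym_ab (G' G : graph T) u v a b Na Nb :
  d1ext G' G u v a b Na Nb -> d1ext G' G u v b a Nb Na.
Proof.
case=> uvE [aV bV ab] [NaV NbV Na3 Nb3] [uN vN] [VG EG].
have NbNa y : (y \in Nb :|: Na) = (y \in Na :|: Nb) by rewrite setUC.
split=> //; first by split; rewrite // eq_sym.
- by rewrite !NbNa.
by rewrite [[set b; a]]setUC VG EG [_ :|: [set [set b; x] | x in Nb]]setUC.
Qed.

Section Facts.
Variables (G' G : graph T) (u v a b : T) (Na Nb : {set T}).
Hypotheses (simG' : simple_graph G') (ext : d1ext G' G u v a b Na Nb).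

Lemma d1ext_old_edge e : e \in gE G' -> (a \notin e) && (b \notin e).
Proof.
case: ext => _ [aV bV _] _ _ _ /simG' [_ /subsetP eV].
by rewrite (contra (eV a) aV) (contra (eV b) bV).
Qed.

Lemma d1ext_nbr y : y \in Na :|: Nb -> [/\ y \in gV G', y != a & y != b].
Proof.
case: ext => _ [aV bV _] [NaV NbV _ _] _ _.
rewrite in_setU => /orP [/(subsetP NaV) | /(subsetP NbV)] yV;
  by split; [ | exact: memPn aV _ yV | exact: memPn bV _ yV].
Qed.

Lemma d1ext_nbrNa y : y \in Na -> [/\ y \in gV G', y != a & y != b].
Proof. by move=> yN; apply: d1ext_nbr; rewrite in_setU yN. Qed.

Lemma d1ext_nbrNb y : y \in Nb -> [/\ y \in gV G', y != a & y != b].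
Proof. by move=> yN; apply: d1ext_nbr; rewrite in_setU yN orbT. Qed.

Lemma d1ext_uv : u != v.
Proof.
case: ext => /simG' [] + _ _ _ _ _.
by rewrite cards2; case: (u != v).
Qed.

Lemma d1ext_sum (K : nmodType) (F : {set T} -> K) :
  \sum_(e in gE G) F e = \sum_(e in gE G' :\ [set u; v]) F e + F [set a; b]
    + \sum_(y in Na) F [set a; y] + \sum_(y in Nb) F [set b; y].
Proof.
have [_ [_ _ ab] _ _ [_ ->]] := ext.
have starA : {in [set [set a; y] | y in Na], forall e : {set T},
                (a \in e) && (b \notin e)}.
  move=> _ /imsetP [y /d1ext_nbrNa [_ ya yb] ->]; rewrite !inE eqxx /=.
  by rewrite negb_or eq_sym ab eq_sym yb.
have starB : {in [set [set b; y] | y in Nb], forall e : {set T},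
                (b \in e) && (a \notin e)}.
  move=> _ /imsetP [y /d1ext_nbrNb [_ ya yb] ->]; rewrite !inE eqxx /=.
  by rewrite negb_or ab eq_sym ya.
rewrite big_setU_disjoint; last first.
  apply: (disjoint_sep (P := fun e : {set T} => (a \in e) == (b \in e))) => e.
    rewrite !inE => /orP [/andP [_ /d1ext_old_edge] | /eqP ->].
      by case/andP => /negbTE -> /negbTE ->.
    by rewrite !inE !eqxx orbT.
  by rewrite in_setU => /orP [/starA | /starB] /andP [-> /negbTE ->].
rewrite big_setU_disjoint; last first.
  apply: (disjoint_sep (P := fun e : {set T} => a \notin e)) => e.
    by rewrite in_setD1 => /andP [_ /d1ext_old_edge /andP []].
  by move/set1P ->; rewrite !inE eqxx.
rewrite big_setU_disjoint; last first.
  apply: (disjoint_sep (P := fun e : {set T} => a \in e)) => e; first by case/starA/andP.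
  by case/starB/andP.
rewrite big_set1 !big_imset ?addrA // => x y.
  by move=> /d1ext_nbrNb [_ _ xb] _; apply: set2_inj.
by move=> /d1ext_nbrNa [_ xa _] _; apply: set2_inj.
Qed.

Lemma d1ext_stress_at_a (K : pzRingType) (f q : T -> 'I_3 -> K) w k :
  {in gV G', forall z, q z =1 f z} ->
  \sum_(e in gE G) w e * rig_coef q e a k =
  w [set a; b] * (q a k - q b k) + \sum_(y in Na) w [set a; y] * (q a k - f y k).
Proof.
have [_ [_ _ ab] _ _ _] := ext; move=> qf.
rewrite d1ext_sum [X in X + _ + _ + _]big1 ?add0r => [|e]; last first.
  rewrite in_setD1 => /andP [_ /d1ext_old_edge /andP [ae _]].
  by rewrite rig_coef_notin ?mulr0.
rewrite [X in _ + X]big1 ?addr0 => [|y /d1ext_nbrNb [_ ya _]]; last first.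
  by rewrite rig_coef_notin ?mulr0 // !inE negb_or ab eq_sym.
rewrite rig_coef2 // eqxx; congr (_ + _); apply: eq_bigr => y /d1ext_nbrNa [yV ya _].
by rewrite rig_coef2 1?eq_sym // eqxx (qf y yV).
Qed.

Lemma d1ext_stress_at_old (K : pzRingType) (f : T -> 'I_3 -> K) w z k : z \in gV G' ->
  \sum_(e in gE G) w e * rig_coef f e z k =
  \sum_(e in gE G' :\ [set u; v]) w e * rig_coef f e z k
  + ((if z \in Na then w [set a; z] * (f z k - f a k) else 0)
     + (if z \in Nb then w [set b; z] * (f z k - f b k) else 0)).
Proof.
have [_ [aV bV _] _ _ _] := ext; move=> zV.
have [za zb] := (memPn aV z zV, memPn bV z zV).
rewrite d1ext_sum rig_coef_notin ?mulr0 ?addr0 -?addrA; last by rewrite !inE negb_or za.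
congr (_ + (_ + _)).
  rewrite -(sum_if_eq _ _ (fun y => w [set a; y] * (f y k - f a k))).
  apply: eq_bigr => y /d1ext_nbrNa [_ ya _].
  rewrite rig_coef2 ?(negbTE za) 1?[z == y]eq_sym; last by rewrite eq_sym.
  by case: eqP => [->|]; rewrite ?mulr0.
rewrite -(sum_if_eq _ _ (fun y => w [set b; y] * (f y k - f b k))).
apply: eq_bigr => y /d1ext_nbrNb [_ _ yb].
rewrite rig_coef2 ?(negbTE zb) 1?[z == y]eq_sym; last by rewrite eq_sym.
by case: eqP => [->|]; rewrite ?mulr0.
Qed.

Lemma d1ext_lift_stress_free (K : pzRingType) (f q : T -> 'I_3 -> K) w lam :
  stress_free G' f -> {in gV G', forall z, q z =1 f z} -> is_stress G q w ->
  (forall z k, z \in gV G' ->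
     (if z \in Na then w [set a; z] * (f z k - q a k) else 0)
     + (if z \in Nb then w [set b; z] * (f z k - q b k) else 0)
     = lam * rig_coef f [set u; v] z k) ->
  lam = 0 /\ forall e, e \in gE G' :\ [set u; v] -> w e = 0.
Proof.
move=> freeG' qf hw forces; have [uvE _ _ _ [VG _]] := ext.
pose w' e := if e == [set u; v] then lam else w e.
have /freeG' w'0 : is_stress G' f w'.
  move=> z zV k; have zG : z \in gV G by rewrite VG in_setU zV.
  rewrite (big_setD1 _ uvE) /= /w' eqxx -[RHS](hw z zG k) d1ext_stress_at_old //.
  rewrite !(qf z zV) -forces // addrC; congr (_ + _).
  apply: eq_bigr => e /setD1P [/negbTE -> eE]; congr (_ * _).
  apply: eq_rig_coef => x /setU1P xe; symmetry; apply: qf.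
  by case: xe => [-> // | /(subsetP (proj2 (simG' eE)))].
split; first by have := w'0 _ uvE; rewrite /w' eqxx.
by move=> e /setD1P [/negbTE euv /w'0]; rewrite /w' euv.
Qed.

Lemma d1ext_stress_vanish (K : pzRingType) (w : {set T} -> K) :
  (forall e, e \in gE G' :\ [set u; v] -> w e = 0) -> w [set a; b] = 0 ->
  {in Na, forall y, w [set a; y] = 0} -> {in Nb, forall y, w [set b; y] = 0} ->
  forall e, e \in gE G -> w e = 0.
Proof.
have [_ _ _ _ [_ ->]] := ext => wE wab wNa wNb e.
by rewrite !in_setU => /orP [/orP [/wE | /set1P ->] | /orP [] /imsetP [y yN ->]]; auto.
Qed.

End Facts.
End DoubleExtension.

Definition relocate (T : finType) (K : pzRingType) (f : T -> 'I_3 -> K) (z0 : T)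
    (g : 'I_3 -> K) : T -> 'I_3 -> K :=
  fun z k => if z == z0 then g k else f z k.

Definition on_line (T : finType) (K : pzRingType) (f : T -> 'I_3 -> K) (u v : T)
    (t : K) : 'I_3 -> K :=
  fun k => f u k + t * (f v k - f u k).

Section SpecialPositions.
Variables (R : realType) (T : finType) (p : T -> 'rV[R]_3).
Variables (G' G : graph T) (u v a b : T) (Na Nb : {set T}).
Hypotheses (gp : generic p) (simG' : simple_graph G').
Hypotheses (ext : d1ext G' G u v a b Na Nb) (freeG' : stress_free G' (coords p)).
Local Notation f := (coords p).

Lemma d1ext_stress_generic_b (q : T -> 'I_3 -> R) w :
  {in gV G', forall z, q z =1 f z} -> q b =1 f b -> is_stress G q w ->
  w [set a; b] = 0 -> {in Nb, forall y, w [set b; y] = 0}.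
Proof.
move=> qf qb hw wab0.
have [_ [_ bV _] [_ NbV _ Nb3] _ [VG _]] := ext.
have [y1 y1N] : exists y1, y1 \in Nb by apply/card_gt0P; rewrite Nb3.
have [y2 [y3 [uniq_y eNb]]] := card3_set1U Nb3 y1N.
have bNb : b \notin [set y1; y2; y3] by rewrite -eNb; apply: contra (subsetP NbV b) bV.
have [c1 c2 c3] : [/\ - w [set b; y1] = 0, - w [set b; y2] = 0 & - w [set b; y3] = 0].
  apply: (generic_affine_indep gp (uniq_cons_set3 uniq_y bNb)) => k.
  have bG : b \in gV G by rewrite VG !inE eqxx !orbT.
  rewrite -[RHS](hw b bG k) (d1ext_stress_at_a simG' (d1ext_sym_ab ext) w k qf).
  rewrite [[set b; a]]setUC wab0 mul0r add0r eNb big_set3 // qb.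
  by rewrite /coords; ring.
by move=> y; rewrite eNb !inE => /orP [/orP [] | ] /eqP ->; lra.
Qed.

Local Notation q2 := (relocate f a (on_line f u v 2)).

Lemma q2_a k : q2 a k = f u k + 2 * (f v k - f u k).
Proof. by rewrite /relocate eqxx. Qed.

Lemma q2_b : q2 b =1 f b.
Proof. by have [_ [_ _ ab] _ _ _] := ext => k; rewrite /relocate eq_sym (negbTE ab). Qed.

Lemma q2_old : {in gV G', forall z, q2 z =1 f z}.
Proof.
by have [_ [aV _ _] _ _ _] := ext => z zV k; rewrite /relocate (negbTE (memPn aV z zV)).
Qed.

Lemma stress_free_d1ext_same_side : u \in Na -> v \in Na -> stress_free G q2.
Proof.
move=> uNa vNa w hw; have [_ [_ bV _] [NaV _ Na3 _] _ [VG _]] := ext.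
have [x [uniq_uvx eNa]] := card3_set2U Na3 uNa vNa (d1ext_uv simG' ext).
have [c1 c2 c3] :
    [/\ - w [set a; b] - 2 * w [set a; u] - w [set a; v] - w [set a; x] = 0,
        2 * w [set a; b] + 2 * w [set a; u] + w [set a; v] + 2 * w [set a; x] = 0
      & - w [set a; x] = 0].
  have bNa : b \notin [set u; v; x] by rewrite -eNa; apply: contra (subsetP NaV b) bV.
  apply: (generic_affine_indep gp (uniq_cons_set3 uniq_uvx bNa)) => k.
  have aG : a \in gV G by rewrite VG !inE eqxx orbT.
  rewrite -[RHS](hw a aG k) (d1ext_stress_at_a simG' ext w k q2_old).
  by rewrite eNa big_set3 // q2_a q2_b /coords; ring.
have [wab0 wax0 wav] : [/\ w [set a; b] = 0, w [set a; x] = 0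
                         & w [set a; v] = - 2 * w [set a; u]] by split; lra.
have wNb := d1ext_stress_generic_b q2_old q2_b hw wab0.
have [wau0 wE] : 2 * w [set a; u] = 0 /\ forall e, e \in gE G' :\ [set u; v] -> w e = 0.
  apply: (d1ext_lift_stress_free simG' ext freeG' q2_old hw) => z k zV.
  rewrite [X in _ + X](_ : _ = 0) ?addr0; last by case: ifP => // /wNb ->; rewrite mul0r.
  rewrite (rig_coef2 _ _ _ (d1ext_uv simG' ext)) q2_a eNa !inE.
  case: (eqVneq z u) => [-> | zu] /=; first by rewrite /coords; ring.
  case: (eqVneq z v) => [-> | zv] /=; first by rewrite wav /coords; ring.
  by case: eqP => [-> | _]; rewrite ?wax0 ?mul0r ?mulr0.
apply: (d1ext_stress_vanish ext) => // y; rewrite eNa !inE.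
by move=> /orP [/orP [] | ] /eqP ->; lra.
Qed.

Local Notation q23 := (relocate (relocate f b (on_line f u v 3)) a (on_line f u v 2)).

Lemma q23_a k : q23 a k = f u k + 2 * (f v k - f u k).
Proof. by rewrite /relocate eqxx. Qed.

Lemma q23_b k : q23 b k = f u k + 3 * (f v k - f u k).
Proof. by have [_ [_ _ ab] _ _ _] := ext; rewrite /relocate eq_sym (negbTE ab) eqxx. Qed.

Lemma q23_old : {in gV G', forall z, q23 z =1 f z}.
Proof.
have [_ [aV bV _] _ _ _] := ext => z zV k.
by rewrite /relocate (negbTE (memPn aV z zV)) (negbTE (memPn bV z zV)).
Qed.

Lemma d1ext_opposite_sides_stress w :
  u \in Na -> u \notin Nb -> v \in Nb -> v \notin Na -> is_stress G q23 w ->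
  [/\ w [set a; b] = 2 * w [set a; u], w [set b; v] = - w [set a; u],
      {in Na, forall y, y != u -> w [set a; y] = 0}
    & {in Nb, forall y, y != v -> w [set b; y] = 0}].
Proof.
move=> uNa uNb vNb vNa hw; have [_ _ [_ _ Na3 Nb3] _ [VG _]] := ext.
have [x1 [x2 [uniq_ux eNa]]] := card3_set1U Na3 uNa.
have [y1 [y2 [uniq_vy eNb]]] := card3_set1U Nb3 vNb.
have [aG bG] : a \in gV G /\ b \in gV G by rewrite VG !inE !eqxx !orbT.
have [c1 c2 c3] :
    [/\ w [set a; b] - 2 * w [set a; u] - w [set a; x1] - w [set a; x2] = 0,
        - w [set a; x1] = 0 & - w [set a; x2] = 0].
  have vNa' : v \notin [set u; x1; x2] by rewrite -eNa.
  apply: (generic_affine_indep gp (uniq_cons_set3 uniq_ux vNa')) => k.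
  rewrite -[RHS](hw a aG k) (d1ext_stress_at_a simG' ext w k q23_old).
  by rewrite eNa big_set3 // q23_a q23_b /coords; ring.
have [d1 d2 d3] :
    [/\ w [set a; b] + 2 * w [set b; v] + 3 * w [set b; y1] + 3 * w [set b; y2] = 0,
        - w [set b; y1] = 0 & - w [set b; y2] = 0].
  have uNb' : u \notin [set v; y1; y2] by rewrite -eNb.
  apply: (generic_affine_indep gp (uniq_cons_set3 uniq_vy uNb')) => k.
  rewrite -[RHS](hw b bG k) (d1ext_stress_at_a simG' (d1ext_sym_ab ext) w k q23_old).
  by rewrite [[set b; a]]setUC eNb big_set3 // q23_a q23_b /coords; ring.
split; [lra | lra | move=> y; rewrite eNa | move=> y; rewrite eNb];
  by rewrite !inE => /orP [/orP [] | ] /eqP ->; rewrite ?eqxx // => _; lra.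
Qed.

Lemma stress_free_d1ext_opposite_sides :
  u \in Na -> u \notin Nb -> v \in Nb -> v \notin Na -> stress_free G q23.
Proof.
move=> uNa uNb vNb vNa w hw.
have [wab wbv wNa wNb] := d1ext_opposite_sides_stress uNa uNb vNb vNa hw.
have [wau0 wE] : 2 * w [set a; u] = 0 /\ forall e, e \in gE G' :\ [set u; v] -> w e = 0.
  apply: (d1ext_lift_stress_free simG' ext freeG' q23_old hw) => z k zV.
  rewrite (rig_coef2 _ _ _ (d1ext_uv simG' ext)) q23_a q23_b.
  case: (eqVneq z u) => [-> | zu]; first by rewrite uNa (negbTE uNb) /coords; ring.
  case: (eqVneq z v) => [-> | zv]; first by rewrite vNb (negbTE vNa) wbv /coords; ring.
  rewrite mulr0; case: ifP => [/wNa/(_ zu) -> | _]; case: ifP => [/wNb/(_ zv) -> | _];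
    by rewrite ?mul0r ?addr0.
apply: (d1ext_stress_vanish ext) => // [| y yN | y yN]; first by lra.
  by case: (eqVneq y u) => [-> | /(wNa y yN)]; first by lra.
by case: (eqVneq y v) => [-> | /(wNb y yN)]; first by lra.
Qed.

End SpecialPositions.

Lemma d1ext_exists_stress_free (R : realType) (T : finType) (p : T -> 'rV[R]_3)
    (G' G : graph T) u v a b Na Nb :
  generic p -> simple_graph G' -> d1ext G' G u v a b Na Nb ->
  stress_free G' (coords p) -> exists q : T -> 'I_3 -> R, stress_free G q.
Proof.
move=> gp simG' ext freeG'; have [_ _ _ [uN vN] _] := ext.
wlog uNa : a b Na Nb ext uN vN / u \in Na.
  move=> hwlog; move: (uN); rewrite in_setU => /orP [uNa | uNb].
    exact: hwlog ext uN vN uNa.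
  by apply: hwlog (d1ext_sym_ab ext) _ _ uNb; rewrite setUC.
have [vNa | vNa] := boolP (v \in Na).
  by eexists; apply: stress_free_d1ext_same_side gp simG' ext freeG' uNa vNa.
have vNb : v \in Nb by move: vN; rewrite in_setU (negbTE vNa).
have [uNb | uNb] := boolP (u \in Nb).
  have ext' := d1ext_sym_ab ext.
  by eexists; apply: stress_free_d1ext_same_side gp simG' ext' freeG' uNb vNb.
by eexists; apply: stress_free_d1ext_opposite_sides gp simG' ext freeG' uNa uNb vNb vNa.
Qed.

Theorem lemma5p7 (R : realType) (T : finType) (G' G : graph T) :
  simple_graph G' -> R3_independent R G' -> double_1_extension G' G ->
  R3_independent R G.
Proof.
move=> simG' indG' [u [v [a [b [Na [Nb ext]]]]]] p gp.
have [q freeGq] := d1ext_exists_stress_free gp simG' ext (indG' p gp).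
exact: generic_stress_free gp freeGq.
Qed.
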